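(* Let $G$ be an extraspecial $2$-group. (i) Two elements $g,h\in G$ are automorphic (i.e. $\varphi(g)=h$ for some $\varphi\in\mathrm{Aut}(G)$) if and only if $g$ and $h$ have the same order and ($g\in Z(G)\iff h\in Z(G)$). (ii) The number of orbits of the natural action of $\mathrm{Aut}(G)$ on $G$ is $3$ if $G$ is isomorphic to the quaternion group $Q_2$ of order $8$, and $4$ otherwise.
   Context: A special $p$-group is a finite $p$-group whose center, derived subgroup and Frattini subgroup coincide and are elementary abelian; it is extraspecial if $|Z(G)|=p$. *)

From mathcomp Require Import all_boot all_fingroup all_solvable.
Set Implicit Arguments.
Unset Strict Implicit.
Unset Printing Implicit Defensive.

From mathcomp Require Import all_boot all_fingroup all_solvable.
Set Implicit Arguments.
Unset Strict Implicit.
Unset Printing Implicit Defensive.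
Local Open Scope group_scope.

(* Write Z(G) = {1, z}.  Commutators and squares of G lie in Z(G), so for a
   suitable cocycle c built from the commutation bits [~ x, v] != 1 the map
   v |-> v * c v is an automorphism: the transvection along an x with x^2 = z,
   and the Siegel map of two commuting involutions y, t.  For non-central g, h
   with g^2 = h^2, the transvection along g^-1 h sends g to h when [~ g, h] != 1;
   when g and h commute one passes through an element y commuting with neither,
   and a Siegel map covers the remaining case g^2 = z, y^2 = 1.  Hence the
   orbits are {1}, {z}, the non-central involutions and the elements of order
   4; Q_8 is the only extraspecial 2-group with no non-central involution. *)

Lemma Aut_of_cocycle (gT : finGroupType) (G : {group gT}) (c : gT -> gT) :
    {in G, forall v, c v \in G} ->
    {in G &, forall v w, c (v * w) = c v ^ w * c w} ->
    {in G, forall v, v * c v = 1 -> v = 1} ->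
  exists2 a, a \in Aut G & {in G, forall v, a v = v * c v}.
Proof.
move=> Gc cM ker1.
have fM : {in G &, {morph (fun v => v * c v) : v w / v * w}}.
  by move=> v w Gv Gw /=; rewrite cM // mulgA -(mulgA v) -conjgC !mulgA.
pose f := Morphism fM.
have injf : 'injm f.
  by apply/subsetP => v /morphpreP[Gv /set1P fv1]; apply/set1P/ker1.
have fG : f @* G = G.
  apply/(morphim_fixP injf) => //.
  by apply/subsetP => _ /morphimP[v _ Gv ->]; rewrite groupM ?Gc.
by exists (aut injf fG); [exact: Aut_aut | exact: autE].
Qed.

Lemma expg_odd (gT : finGroupType) (x : gT) n : x ^+ 2 = 1 -> x ^+ n = x ^+ odd n.
Proof. by move=> x2; rewrite -modn2 expg_mod. Qed.

Section CommutingInvolutions.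
Variables (gT : finGroupType) (y t z : gT).
Hypotheses (y2 : y ^+ 2 = 1) (t2 : t ^+ 2 = 1) (z2 : z ^+ 2 = 1).
Hypotheses (cyt : commute y t) (cyz : commute y z) (ctz : commute t z).

Definition word i j k := y ^+ i * t ^+ j * z ^+ k.

Lemma wordM i j k i' j' k' :
  word i j k * word i' j' k' = word (i + i') (j + j') (k + k').
Proof.
have czy : commute (z ^+ k) (y ^+ i') by apply/commuteX2/commute_sym.
have czt : commute (z ^+ k) (t ^+ j') by apply/commuteX2.
have cty : commute (t ^+ j) (y ^+ i') by apply/commuteX2/commute_sym.
rewrite /word !expgD -!mulgA; congr (_ * _).
rewrite [z ^+ k * _]mulgA czy -!mulgA [z ^+ k * _]mulgA czt -!mulgA.
by rewrite [t ^+ j * (y ^+ i' * _)]mulgA cty -!mulgA.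
Qed.

Lemma word_odd i j k : word i j k = word (odd i) (odd j) (odd k).
Proof. by rewrite /word -!expg_odd. Qed.

Lemma wordX i j k n : word i j k ^+ n = word (i * n) (j * n) (k * n).
Proof.
elim: n => [|n IHn]; first by rewrite expg0 !muln0 /word !expg0 !mulg1.
by rewrite expgSr IHn wordM !mulnS ![_ * n + _]addnC.
Qed.

Lemma wordJ w b b' i j k : y ^ w = word 1 0 b' -> t ^ w = word 0 1 b -> z ^ w = z ->
  word i j k ^ w = word i j (k + b' * i + b * j).
Proof.
move=> yw tw zw.
have zw' : z ^ w = word 0 0 1 by rewrite zw /word !expg0 !mul1g expg1.
rewrite {1}/word !conjMg !conjXg yw tw zw' !wordX !wordM.
by rewrite !mul1n !mul0n !addn0 add0n addnC addnA.
Qed.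

Lemma commute_word i j k : commute y (word i j k) /\ commute t (word i j k).
Proof.
by split; apply: commuteM; (apply: commuteM || idtac); apply: commuteX;
  rewrite ?commute_refl //; apply: commute_sym.
Qed.

End CommutingInvolutions.

Definition ncomm (gT : finGroupType) (x v : gT) := [~ x, v] != 1.

Lemma ncommC (gT : finGroupType) (x v : gT) : ncomm x v = ncomm v x.
Proof. by rewrite /ncomm -invgR invg_eq1. Qed.

Lemma ncommP (gT : finGroupType) (x v : gT) : reflect (commute x v) (~~ ncomm x v).
Proof. by rewrite negbK; apply: commgP. Qed.

Lemma ncommgg (gT : finGroupType) (x : gT) : ncomm x x = false.
Proof. by rewrite /ncomm commgg eqxx. Qed.

Lemma ncomm_cent1 (gT : finGroupType) (x v : gT) : ncomm x v = (x \notin 'C[v]).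
Proof. by apply/negb_inj; rewrite negbK; apply/ncommP/cent1P. Qed.

Definition automorphic (gT : finGroupType) (G : {group gT}) (g h : gT) :=
  exists2 a, a \in Aut G & a g = h.

Lemma automorphic_trans (gT : finGroupType) (G : {group gT}) (g x h : gT) :
  automorphic G g x -> automorphic G x h -> automorphic G g h.
Proof.
by case=> a1 Aa1 <-; case=> a2 Aa2 <-; exists (a1 * a2); [apply: groupM | apply: permM].
Qed.

Lemma automorphic_invariants (gT : finGroupType) (G : {group gT}) (g h : gT) :
  g \in G -> automorphic G g h -> #[g] = #[h] /\ (g \in 'Z(G) <-> h \in 'Z(G)).
Proof.
move=> Gg [a Aa <-]; split; first by rewrite -(autmE Aa) (order_injm (injm_autm Aa)).
have /charP[_ chZ] := center_char G.
have aZ : a @: 'Z(G) = 'Z(G).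
  by rewrite -(autmE Aa) -morphimEsub ?center_sub ?chZ ?injm_autm ?im_autm.
rewrite -{2}aZ; split=> [Zg | /imsetP[u Zu /(perm_inj) ->//]].
exact: imset_f.
Qed.

Lemma not_subsetU2 (gT : finGroupType) (G H K : {group gT}) :
    ~~ (G \subset H) -> ~~ (G \subset K) ->
  exists2 y, y \in G & (y \notin H) && (y \notin K).
Proof.
case/subsetPn=> u Gu Hu; case/subsetPn=> w Gw Kw.
case Ku: (u \in K); last by exists u; rewrite ?Hu ?Ku.
case Hw: (w \in H); last by exists w; rewrite ?Hw ?Kw.
exists (u * w); first by rewrite groupM.
by rewrite groupMr // Hu groupMl // Kw.
Qed.

Lemma card_fibres (T rT : finType) (A : {set T}) (f : T -> rT) :
  #|[set [set y in A | f y == f x] | x in A]| = #|f @: A|.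
Proof.
pose fibre k := [set y in A | f y == k].
rewrite (eq_imset (g := fibre \o f)) // imset_comp card_in_imset //.
move=> _ k2 /imsetP[x Ax ->] _ eq_fibre.
have : x \in fibre (f x) by rewrite inE Ax eqxx.
by rewrite eq_fibre inE => /andP[_ /eqP].
Qed.

Lemma Q8_involutions_central (gT : finGroupType) (G : {group gT}) :
  G \isog 'Q_8 -> {in G, forall x, #[x] = 2 -> x \in 'Z(G)}.
Proof.
case/isogP => f injf imf x Gx ox.
have isoQ : 'Q_8 \isog [set: 'Q_(2 ^ 3)] by exact: isog_refl.
have [[x0 y0] genQ _] := generators_quaternion (isT : 2 < 3) isoQ.
have [_ _ [defZQ _ uniq_inv _ _] _ _] := quaternion_structure (isT : 2 < 3) genQ isoQ.
have : f x \in 'Z('Q_8).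
  by rewrite (uniq_inv (f x)) ?defZQ ?cycle_id ?inE ?(order_injm injf Gx).
rewrite -imf -injm_center // => /morphimP[x' Gx' Zx' /(injmP injf _ _ Gx Gx') ->] //.
Qed.

Lemma center_extraspecial2 (gT : finGroupType) (G : {group gT}) :
  2.-group G -> extraspecial G -> exists2 z, z != 1 & 'Z(G) = [set 1; z].
Proof.
move=> pG esG; have oZ := card_center_extraspecial pG esG.
have [z Zz ntz] : exists2 z, z \in 'Z(G) & z != 1.
  by apply/trivgPn; rewrite -cardG_gt1 oZ.
exists z => //; apply/eqP; rewrite eq_sym eqEcard subUset !sub1set group1 Zz.
by rewrite cards2 oZ eq_sym ntz.
Qed.

Section Extraspecial2.
Variables (gT : finGroupType) (G : {group gT}) (z : gT).
Hypotheses (pG : 2.-group G) (esG : extraspecial G).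
Hypotheses (defZ : 'Z(G) = [set 1; z]) (ntz : z != 1).

Lemma center_z : z \in 'Z(G). Proof. by rewrite defZ !inE eqxx orbT. Qed.

Lemma mem_z : z \in G. Proof. exact: subsetP (center_sub G) _ center_z. Qed.

Lemma centerP u : reflect (u = 1 \/ u = z) (u \in 'Z(G)).
Proof. by rewrite defZ; apply: set2P. Qed.

Lemma commute_z v : v \in G -> commute z v.
Proof. by move=> Gv; have /setIP[_ /centP cz] := center_z; apply: cz. Qed.

Lemma expz2 : z ^+ 2 = 1.
Proof.
have oZ : #|'Z(G)| = 2 by rewrite defZ cards2 eq_sym ntz.
by apply/eqP; rewrite -order_dvdn -oZ order_dvdG ?center_z.
Qed.

Lemma order_z : #[z] = 2.
Proof. by apply: nt_prime_order => //; rewrite expz2. Qed.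

Lemma expzM (a b : bool) : z ^+ a * z ^+ b = z ^+ (a (+) b).
Proof. by rewrite -expgD [LHS](expg_odd _ expz2) oddD !oddb. Qed.

Lemma expz_eq1 (b : bool) : (z ^+ b == 1) = ~~ b.
Proof. by case: b; rewrite /= ?expg0 ?expg1 ?eqxx ?(negPf ntz). Qed.

Lemma commg_center v w : v \in G -> w \in G -> [~ v, w] \in 'Z(G).
Proof. by move=> Gv Gw; have [[_ <-] _] := esG; apply: mem_commg. Qed.

Lemma expg2_center v : v \in G -> v ^+ 2 \in 'Z(G).
Proof.
move=> Gv; have [[<- _] _] := esG; rewrite (Phi_joing pG) mem_gen // inE.
by have := Mho_p_elt 1 Gv (mem_p_elt pG Gv); rewrite expn1 => ->; rewrite orbT.
Qed.

Lemma expg2_cases v : v \in G -> v ^+ 2 = 1 \/ v ^+ 2 = z.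
Proof. by move/expg2_center/centerP. Qed.

Lemma commg_ncomm x v : x \in G -> v \in G -> [~ x, v] = z ^+ ncomm x v.
Proof.
rewrite /ncomm => Gx Gv; case/centerP: (commg_center Gx Gv) => ->.
  by rewrite eqxx expg0.
by rewrite ntz expg1.
Qed.

Lemma conjg_ncomm x v : x \in G -> v \in G -> x ^ v = x * z ^+ ncomm x v.
Proof. by move=> Gx Gv; rewrite conjg_mulR commg_ncomm. Qed.

Lemma ncommMr x v w : x \in G -> v \in G -> w \in G ->
  ncomm x (v * w) = ncomm x v (+) ncomm x w.
Proof.
move=> Gx Gv Gw; rewrite {1}/ncomm commgMJ !commg_ncomm // conjXg.
have zw : z ^ w = z by apply/conjg_fixP/commgP/commute_z.
by rewrite zw expzM expz_eq1 negbK addbC.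
Qed.

Lemma ncommVr x v : x \in G -> v \in G -> ncomm x v^-1 = ncomm x v.
Proof.
move=> Gx Gv; have := ncommMr Gx Gv (groupVr Gv).
by rewrite mulgV {1}/ncomm commg1 eqxx; case: (ncomm x v); case: (ncomm x v^-1).
Qed.

Lemma transvection_aut x : x \in G -> x ^+ 2 = z ->
  exists2 a, a \in Aut G & {in G, forall v, a v = v * x ^+ ncomm x v}.
Proof.
move=> Gx x2; apply: Aut_of_cocycle => [v Gv | v w Gv Gw | v Gv].
- by rewrite groupX.
- rewrite ncommMr // conjXg conjg_ncomm //.
  case: (ncomm x v); case: (ncomm x w); rewrite /= ?expg0 ?expg1 ?mulg1 ?mul1g //.
  by rewrite -mulgA (commute_z Gx) mulgA -expg2 x2 -expg2 expz2.
case E: (ncomm x v); rewrite /= ?expg0 ?expg1 ?mulg1 // => vx1.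
have vE : v = x^-1 by rewrite -(mulgK x v) vx1 mul1g.
by move/ncommP: (commuteV (commute_refl x)); rewrite -vE E.
Qed.

(* The Siegel transformation of the quadratic space G / Z(G) attached to the
   orthogonal singular vectors y and t. *)
Lemma siegel_aut y t : y \in G -> t \in G -> y ^+ 2 = 1 -> t ^+ 2 = 1 ->
    commute y t ->
  exists2 a, a \in Aut G & {in G, forall v,
    a v = v * word y t z (ncomm t v) (ncomm y v) (ncomm t v && ncomm y v)}.
Proof.
move=> Gy Gt y2 t2 cyt.
have [cyz ctz] := (commute_sym (commute_z Gy), commute_sym (commute_z Gt)).
have Gword i j k : word y t z i j k \in G by rewrite !groupM ?groupX ?mem_z.
apply: Aut_of_cocycle => [v Gv | v w Gv Gw | v Gv].
- exact: Gword.
- rewrite (wordJ cyt cyz ctz (b := ncomm t w) (b' := ncomm y w)); first last.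
  + exact/conjg_fixP/commgP/commute_z.
  + by rewrite conjg_ncomm // /word expg0 mul1g expg1.
  + by rewrite conjg_ncomm // /word expg0 mulg1 expg1.
  rewrite (wordM cyt cyz ctz) !ncommMr // [RHS](word_odd y2 t2 expz2).
  rewrite [LHS](word_odd y2 t2 expz2) !oddD !oddM !oddb.
  by case: (ncomm t v); case: (ncomm t w); case: (ncomm y v); case: (ncomm y w).
set c := word _ _ _ _ _ _ => vc1.
have vE : v = c^-1 by rewrite -(mulgK c v) vc1 mul1g.
have [cyc ctc] : commute y c /\ commute t c by apply: commute_word.
have /negbTE tv : ~~ ncomm t v by apply/ncommP; rewrite vE; apply: commuteV.
have /negbTE yv : ~~ ncomm y v by apply/ncommP; rewrite vE; apply: commuteV.
by move: vc1; rewrite /c tv yv /word /= !expg0 !mulg1.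
Qed.

Lemma expg2M v w : v \in G -> w \in G ->
  (v * w) ^+ 2 = v ^+ 2 * w ^+ 2 * z ^+ ncomm v w.
Proof.
move=> Gv Gw; have cwv := commg_ncomm Gw Gv.
by rewrite expMg_Rmul cwv ncommC ?expg1 //; apply/commuteX/commute_sym/commute_z.
Qed.

Lemma automorphic_ncomm g h : g \in G -> h \in G ->
  ncomm g h -> g ^+ 2 = h ^+ 2 -> automorphic G g h.
Proof.
move=> Gg Gh ngh gh2; set x := g^-1 * h.
have Gx : x \in G by rewrite groupM ?groupV.
have ngx : ncomm g x by rewrite ncommMr ?groupV // ncommVr // ncommgg.
have x2 : x ^+ 2 = z.
  have hx : h ^+ 2 = g ^+ 2 * x ^+ 2 * z by rewrite -{1}(mulKVg g h) expg2M // ngx.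
  apply: (mulgI (g ^+ 2)); apply: (mulIg z).
  by rewrite -hx -gh2 -mulgA -expg2 expz2 mulg1.
have [a Aa aE] := transvection_aut Gx x2.
by exists a; rewrite // aE // ncommC ngx mulKVg.
Qed.

Lemma automorphic_via x g h : x \in G -> g \in G -> h \in G ->
    ncomm g x -> ncomm x h -> x ^+ 2 = g ^+ 2 -> g ^+ 2 = h ^+ 2 ->
  automorphic G g h.
Proof.
move=> Gx Gg Gh ngx nxh xg gh.
apply: (automorphic_trans (automorphic_ncomm Gg Gx ngx (esym xg))).
exact: automorphic_ncomm Gx Gh nxh (etrans xg gh).
Qed.

Lemma automorphic_commute g h : g \in G -> h \in G ->
    g \notin 'Z(G) -> h \notin 'Z(G) -> commute g h -> g ^+ 2 = h ^+ 2 ->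
  automorphic G g h.
Proof.
move=> Gg Gh nZg nZh cgh gh2.
have /negbTE ngh : ~~ ncomm g h by apply/ncommP.
have nsubC u : u \in G -> u \notin 'Z(G) -> ~~ (G \subset 'C[u]).
  by move=> Gu; apply: contra; rewrite sub_cent1 => cGu; apply/setIP.
have [y Gy /andP[]] := not_subsetU2 (nsubC g Gg nZg) (nsubC h Gh nZh).
rewrite -!ncomm_cent1 => nyg nyh.
have [yg2 | ] := eqVneq (y ^+ 2) (g ^+ 2).
  by apply: (automorphic_via Gy) => //; rewrite ncommC.
have [g2 | g2] := expg2_cases Gg; have [y2 | y2] := expg2_cases Gy;
  rewrite g2 y2 ?eqxx ?(negPf ntz) ?(eq_sym 1) // => _.
  apply: (automorphic_via (x := y * g)); rewrite ?groupM //.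
  - by rewrite ncommMr // ncommgg addbF ncommC.
  - by rewrite ncommC ncommMr // [ncomm h g]ncommC ngh addbF ncommC.
  - by rewrite expg2M // y2 g2 nyg expg1 mulg1 -expg2 expz2.
set t := g^-1 * h.
have Gt : t \in G by rewrite groupM ?groupV.
have t2 : t ^+ 2 = 1.
  rewrite expgMn ?expgVn ?gh2 ?mulVg //.
  exact: commute_sym (commuteV (commute_sym cgh)).
have cyt : commute y t by apply/ncommP; rewrite ncommMr ?groupV // ncommVr // nyg nyh.
have ngt : ncomm t g = false.
  by rewrite ncommC ncommMr ?groupV // ncommVr // ncommgg ngh.
have [a Aa aE] := siegel_aut Gy Gt y2 t2 cyt.
by exists a; rewrite // aE // ngt nyg /word /= expg0 expg1 mul1g mulg1 mulKVg.
Qed.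

Lemma order_noncentral x : x \in G -> x \notin 'Z(G) ->
  #[x] = if x ^+ 2 == 1 then 2 else 4.
Proof.
move=> Gx nZx; have ntx : x != 1 by apply: contraNneq nZx => ->; apply: group1.
have [x2 | x2] := expg2_cases Gx; rewrite x2 ?eqxx ?(negPf ntz).
  exact: nt_prime_order.
have dv4 : #[x] %| 4 by rewrite order_dvdn (expgM _ 2 2) x2 expz2.
have ndv2 : ~~ (#[x] %| 2) by rewrite order_dvdn x2.
have ndv1 : #[x] != 1%N by rewrite order_eq1.
have le4 := dvdn_leq (isT : 0 < 4) dv4; move: le4 dv4 ndv2 ndv1.
by case: #[x] => [|[|[|[|[|n]]]]].
Qed.

Lemma expg2_order g h : g \in G -> h \in G -> #[g] = #[h] -> g ^+ 2 = h ^+ 2.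
Proof.
move=> Gg Gh ogh; have e : (g ^+ 2 == 1) = (h ^+ 2 == 1) by rewrite -!order_dvdn ogh.
have [g2 | g2] := expg2_cases Gg; have [h2 | h2] := expg2_cases Gh;
  by move: e; rewrite g2 h2 // eqxx (negPf ntz).
Qed.

Lemma automorphicP g h : g \in G -> h \in G ->
  automorphic G g h <-> #[g] = #[h] /\ (g \in 'Z(G) <-> h \in 'Z(G)).
Proof.
move=> Gg Gh; split; first exact: automorphic_invariants.
case=> ogh Zgh; case Zg: (g \in 'Z(G)).
  have Zh : h \in 'Z(G) by apply/Zgh.
  suff -> : g = h by exists 1; [exact: group1 | exact: perm1].
  move: ogh; case/centerP: Zg => ->; case/centerP: Zh => ->;
  by rewrite ?order1 ?order_z.
have nZh : h \notin 'Z(G) by apply/negP => /Zgh; rewrite Zg.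
have gh2 := expg2_order Gg Gh ogh.
have [ngh | /ncommP cgh] := boolP (ncomm g h); first exact: automorphic_ncomm.
by apply: automorphic_commute; rewrite ?Zg.
Qed.

Lemma involutions_central_Q8 :
  {in G, forall x, #[x] = 2 -> x \in 'Z(G)} -> G \isog 'Q_8.
Proof.
move=> invZ; have oZ : #|'Z(G)| = 2 by rewrite defZ cards2 eq_sym ntz.
have ncycG : ~~ cyclic G.
  by apply: contra (extraspecial_nonabelian esG); apply: cyclic_abelian.
have defOhm : 'Ohm_1(G) = 'Z(G).
  apply/eqP; rewrite eqEsubset (OhmE _ pG) gen_subG; apply/andP; split.
    apply/subsetP => u /setIdP[Gu]; rewrite inE expn1 => /eqP u2.
    have [-> | ntu] := eqVneq u 1; first exact: group1.
    exact/invZ/nt_prime_order.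
  apply/subsetP => u Zu; rewrite mem_gen // !inE (subsetP (center_sub G)) //.
  by rewrite expn1 -order_dvdn -oZ order_dvdG.
have [n n_gt2 isoG] : exists2 n, n > 2 & G \isog 'Q_(2 ^ n).
  apply/quaternion_classP/eqP.
  move: oZ; rewrite -defOhm => /prime_Ohm1P; rewrite (negPf ncycG) /=.
  by apply=> //; apply: contra ncycG => /eqP->; exact: cyclic1.
suff n3 : n = 3 by rewrite n3 in isoG.
have [[x y] genG _] := generators_quaternion n_gt2 isoG.
have [_ [_ _ oG' _] _ _ _] := quaternion_structure n_gt2 genG isoG.
apply/eqP; rewrite -(subnKC (ltnW n_gt2)) subn2 !eqSS -(@eqn_exp2l 2) //.
by rewrite -oG' -oZ; case: esG => [[_ ->]].
Qed.

Definition orbit_key x := (#[x] == 2, x \in 'Z(G)).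

Lemma order_by_key x : x \in G ->
  #[x] = if #[x] == 2 then 2 else if x \in 'Z(G) then 1%N else 4.
Proof.
move=> Gx; have [-> // | o2] := eqVneq #[x] 2.
case: ifP => [/centerP[-> | xz] | /negbT nZx]; first by rewrite order1.
  by rewrite xz order_z in o2.
by rewrite order_noncentral //; move: o2; rewrite order_noncentral //; case: ifP.
Qed.

Lemma orbit_keyP g h : g \in G -> h \in G ->
  #[g] = #[h] /\ (g \in 'Z(G) <-> h \in 'Z(G)) <-> orbit_key g = orbit_key h.
Proof.
move=> Gg Gh; split=> [[ogh Zgh] | [o2 Zgh]].
  by rewrite /orbit_key ogh; congr pair; apply/idP/idP => /Zgh.
split; last by rewrite Zgh.
by rewrite order_by_key // [RHS]order_by_key // o2 Zgh.
Qed.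

Lemma orbit_Aut x : x \in G ->
  orbit 'P (Aut G) x = [set y in G | orbit_key y == orbit_key x].
Proof.
move=> Gx; apply/setP => y; rewrite inE.
apply/orbitP/andP => [[a Aa <-] | [Gy /eqP/esym kxy]].
  have Gax := Aut_closed Aa Gx.
  split=> //; apply/eqP/esym/(orbit_keyP Gx Gax)/(automorphicP Gx Gax); by exists a.
have [a Aa ax] : automorphic G x y by apply/(automorphicP Gx Gy)/(orbit_keyP Gx Gy).
by exists a.
Qed.

Lemma orbit_key_imset :
  orbit_key @: G = if G \isog 'Q_8 then [set~ (true, false)] else [set: bool * bool].
Proof.
have k1 : (false, true) \in orbit_key @: G.
  by apply/imsetP; exists 1; rewrite // /orbit_key order1 group1.
have k2 : (true, true) \in orbit_key @: G.
  by apply/imsetP; exists z; rewrite ?mem_z // /orbit_key order_z center_z.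
have k3 : (false, false) \in orbit_key @: G.
  have [x Gx ox] := exponent_witness (pgroup_nil pG).
  rewrite (exponent_2extraspecial pG esG) in ox.
  apply/imsetP; exists x => //; rewrite /orbit_key -ox; congr pair.
  by apply/esym/negbTE/negP => /centerP[] xE; move: ox; rewrite xE ?order1 ?order_z.
have k4 : ((true, false) \in orbit_key @: G) = ~~ (G \isog 'Q_8).
  apply/imsetP/idP => [[x Gx [/esym/eqP ox /esym/negbT nZx]] | nQ8].
    by apply/negP => /Q8_involutions_central/(_ x Gx ox); apply/negP.
  have [x Gx /andP[ox nZx]] : exists2 x, x \in G & (#[x] == 2) && (x \notin 'Z(G)).
    apply/exists_inP; apply: contraR nQ8 => /exists_inPn inv_central.
    apply: involutions_central_Q8 => x Gx ox.
    by move: (inv_central x Gx); rewrite ox eqxx negbK.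
  by exists x; rewrite // /orbit_key ox (negPf nZx).
by case: ifP => isoQ; apply/setP => -[[] []]; rewrite !inE ?k1 ?k2 ?k3 ?k4 ?isoQ.
Qed.

End Extraspecial2.

Theorem theorem4p4 (gT : finGroupType) (G : {group gT}) :
  (2).-group G -> extraspecial G ->
  (forall g h : gT, g \in G -> h \in G ->
     ((exists2 phi, phi \in Aut G & phi g = h) <->
      (#[g] = #[h] /\ (g \in 'Z(G) <-> h \in 'Z(G)))))
  /\
  #|[set orbit 'P (Aut G) x | x in G]| = (if G \isog 'Q_8 then 3 else 4).
Proof.
move=> pG esG; have [z ntz defZ] := center_extraspecial2 pG esG.
split=> [g h Gg Gh | ]; first exact: (automorphicP pG esG defZ ntz Gg Gh).
rewrite (eq_in_imset (orbit_Aut pG esG defZ ntz)) card_fibres.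
rewrite (orbit_key_imset pG esG defZ ntz).
by case: ifP => _; rewrite ?cardsC1 ?cardsT card_prod card_bool.
Qed.
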